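(* Let $A$ be an associative algebra (with identity) over a field $\mathbf{k}$, let $q\in A$ be an idempotent, let $(A,q):=\{x\in A\mid qxq=qx\}$, and fix $k\in\mathbf{k}$. Then $(A,q)$ is a Lie algebra under the bracket $$[x,y]_{6,k}:=xy-yx-xyq+yxq+kxqy-kyqx,\qquad x,y\in(A,q).$$
   Context: $(A,q)$ is the (right) invariant algebra induced by the idempotent $q$; it is a subalgebra of $A$. The resulting Lie algebra is denoted $Lie((A,q),[\,,\,]_{6,k})$. *)

From HB Require Import structures.
From mathcomp Require Import all_boot all_order all_algebra.
Set Implicit Arguments. Unset Strict Implicit. Unset Printing Implicit Defensive.
Import GRing.Theory.
Local Open Scope ring_scope.

Definition invariant_alg (K : fieldType) (A : algType K) (q : A) : pred A :=
  fun x => q * x * q == q * x.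

Definition bracket6 (K : fieldType) (A : algType K) (q : A) (k : K) (x y : A) : A :=
  x * y - y * x - x * y * q + y * x * q + k *: (x * q * y) - k *: (y * q * x).

Definition is_lie_algebra_on (K : fieldType) (V : lmodType K) (S : pred V)
    (br : V -> V -> V) : Prop :=
  [/\ 0 \in S /\ (forall (a : K) x y, x \in S -> y \in S -> a *: x + y \in S),
      (forall x y, x \in S -> y \in S -> br x y \in S),
      (forall (a : K) x y z, x \in S -> y \in S -> z \in S ->
          br (a *: x + y) z = a *: br x z + br y z
       /\ br z (a *: x + y) = a *: br z x + br z y),
      (forall x, x \in S -> br x x = 0) &
      (forall x y z, x \in S -> y \in S -> z \in S ->
          br x (br y z) + br y (br z x) + br z (br x y) = 0)].

From mathcomp Require Import all_boot all_order all_algebra.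
Local Open Scope ring_scope.
Import GRing.Theory.
Set Implicit Arguments. Unset Strict Implicit. Unset Printing Implicit Defensive.

(* With p := 1 - q and the twist t(y) := y p + k q y, the bracket is the
   commutator [x,y] = x t(y) - y t(x) of the bilinear product x o y := x t(y).
   For z in (A,q) one has q z p = 0, hence t(z) p = z p = p t(z), and so
   t(y t(z)) = t(y) t(z): the product o is associative on the subalgebra (A,q),
   and the commutator of an associative product is a Lie bracket. *)

Section CommutatorLie.
Variables (K : fieldType) (V : lmodType K) (S : pred V) (m : V -> V -> V).
Hypothesis S0 : 0 \in S.
Hypothesis S_lincomb : forall (a : K) x y, x \in S -> y \in S -> a *: x + y \in S.
Hypothesis S_mul : forall x y, x \in S -> y \in S -> m x y \in S.
Hypothesis mZDl : forall (a : K) x y z, x \in S -> y \in S -> z \in S ->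
  m (a *: x + y) z = a *: m x z + m y z.
Hypothesis mZDr : forall (a : K) x y z, x \in S -> y \in S -> z \in S ->
  m z (a *: x + y) = a *: m z x + m z y.
Hypothesis mA : forall x y z, x \in S -> y \in S -> z \in S ->
  m x (m y z) = m (m x y) z.

Let commutator x y := m x y - m y x.

Lemma S_sub x y : x \in S -> y \in S -> x - y \in S.
Proof. by move=> Sx Sy; rewrite addrC -scaleN1r S_lincomb. Qed.

Lemma mBl x y z : x \in S -> y \in S -> z \in S -> m (x - y) z = m x z - m y z.
Proof.
by move=> Sx Sy Sz; rewrite addrC -scaleN1r mZDl // scaleN1r addrC.
Qed.

Lemma mBr x y z : x \in S -> y \in S -> z \in S -> m z (x - y) = m z x - m z y.
Proof.
by move=> Sx Sy Sz; rewrite addrC -scaleN1r mZDr // scaleN1r addrC.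
Qed.

Lemma commutator_lie_algebra (br : V -> V -> V) :
  (forall x y, x \in S -> y \in S -> br x y = commutator x y) ->
  is_lie_algebra_on S br.
Proof.
move=> brE; split => //.
- by move=> x y Sx Sy; rewrite brE // S_sub // S_mul.
- move=> a x y z Sx Sy Sz; have Sxy := S_lincomb a Sx Sy.
  rewrite !brE // /commutator mZDl // mZDr // !scalerBr.
  by split; rewrite opprD addrACA.
- by move=> x Sx; rewrite brE // /commutator subrr.
move=> x y z Sx Sy Sz.
have Sc u v : u \in S -> v \in S -> commutator u v \in S.
  by move=> Su Sv; rewrite S_sub // S_mul.
rewrite !brE ?Sc // /commutator !mBl ?S_mul // !mBr ?S_mul // !mA //.
move: (m (m x y) z) (m (m x z) y) (m (m y z) x) (m (m z y) x) => a b c d.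
move: (m (m y x) z) (m (m z x) y) => e f.
rewrite !opprB !addrA addrNK addrNK.
rewrite [a - b + d - e + b]addrAC [a - b + d + b]addrAC addrNK.
by rewrite [a + d - e - d]addrAC addrK addrNK subrr.
Qed.

End CommutatorLie.

Section InvariantAlgebra.
Variables (K : fieldType) (A : algType K) (q : A) (k : K).
Hypothesis qq : q * q = q.

Definition twist (y : A) : A := y * (1 - q) + k *: (q * y).

Lemma invariant_algP x : reflect (q * x * q = q * x) (x \in invariant_alg q).
Proof. exact: eqP. Qed.

Lemma invariant_alg_lincomb a x y : x \in invariant_alg q -> y \in invariant_alg q ->
  a *: x + y \in invariant_alg q.
Proof.
move=> /invariant_algP Sx /invariant_algP Sy; apply/invariant_algP.
by rewrite mulrDr mulrDl -!scalerAr -scalerAl Sx Sy.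
Qed.

Lemma invariant_alg_mul x y : x \in invariant_alg q -> y \in invariant_alg q ->
  x * y \in invariant_alg q.
Proof.
move=> /invariant_algP Sx /invariant_algP Sy; apply/invariant_algP.
by rewrite mulrA -Sx -(mulrA _ q y) -mulrA Sy !mulrA.
Qed.

Lemma invariant_alg_idem : q \in invariant_alg q.
Proof. by apply/invariant_algP; rewrite qq. Qed.

Lemma invariant_alg1 : 1 \in invariant_alg q.
Proof. by apply/invariant_algP; rewrite mulr1. Qed.

Lemma invariant_alg_twist y : y \in invariant_alg q -> twist y \in invariant_alg q.
Proof.
have S_compl : 1 - q \in invariant_alg q.
  by rewrite addrC -scaleN1r invariant_alg_lincomb ?invariant_alg1 ?invariant_alg_idem.
move=> Sy; rewrite /twist addrC invariant_alg_lincomb //.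
  exact: invariant_alg_mul invariant_alg_idem Sy.
exact: invariant_alg_mul Sy S_compl.
Qed.

Lemma compl_mul_idem : (1 - q) * q = 0.
Proof. by rewrite mulrBl mul1r qq subrr. Qed.

Lemma compl_idem : (1 - q) * (1 - q) = 1 - q.
Proof. by rewrite mulrBr mulr1 compl_mul_idem subr0. Qed.

Lemma invariant_mul_compl z : z \in invariant_alg q -> q * z * (1 - q) = 0.
Proof. by move=> /invariant_algP Sz; rewrite mulrBr mulr1 Sz subrr. Qed.

Lemma twist_mul_compl z : z \in invariant_alg q -> twist z * (1 - q) = z * (1 - q).
Proof.
move=> Sz; rewrite /twist mulrDl -mulrA compl_idem -scalerAl.
by rewrite invariant_mul_compl // scaler0 addr0.
Qed.

Lemma compl_mul_twist z : z \in invariant_alg q -> (1 - q) * twist z = z * (1 - q).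
Proof.
move=> Sz; rewrite /twist mulrDr -scalerAr !mulrA compl_mul_idem mul0r scaler0 addr0.
by rewrite mulrBl mul1r mulrBl invariant_mul_compl // subr0.
Qed.

Lemma twist_mul y z : z \in invariant_alg q -> twist (y * twist z) = twist y * twist z.
Proof.
move=> Sz; rewrite {1 3}/twist mulrDl -!mulrA twist_mul_compl // compl_mul_twist //.
by rewrite -scalerAl !mulrA.
Qed.

Lemma twistZD a x y : twist (a *: x + y) = a *: twist x + twist y.
Proof.
rewrite /twist mulrDl (mulrDr q) -scalerAl -scalerAr !scalerDr scalerA mulrC addrACA.
by rewrite -scalerA.
Qed.

Lemma bracket6E x y : bracket6 q k x y = x * twist y - y * twist x.
Proof.
rewrite /bracket6 /twist !mulrDr -!scalerAr !mulrA !mulrN !mulr1 opprD opprB addrA.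
congr (_ - _); rewrite (addrC (_ * q)) addrA [LHS]addrAC; congr (_ + _).
by rewrite (addrAC (x * y)) addrAC.
Qed.

End InvariantAlgebra.

Theorem proposition1p2 (K : fieldType) (A : algType K) (q : A) (k : K) :
  q * q = q ->
  is_lie_algebra_on (invariant_alg q) (bracket6 q k).
Proof.
move=> qq; apply: (@commutator_lie_algebra _ _ _ (fun x y => x * twist q k y)).
- by apply/invariant_algP; rewrite mulr0 mul0r.
- exact: invariant_alg_lincomb.
- by move=> x y Sx Sy; rewrite invariant_alg_mul // invariant_alg_twist.
- by move=> a x y z _ _ _; rewrite mulrDl -scalerAl.
- by move=> a x y z _ _ _; rewrite twistZD mulrDr -scalerAr.
- by move=> x y z _ _ Sz; rewrite twist_mul // mulrA.
- by move=> x y _ _; rewrite bracket6E.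
Qed.
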